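(* For each $j=0,\dots,4$, every isometry of the $\mathbb{Z}$-lattice $\Lambda_j$ is induced by an ($\mathcal{E}$-linear) isometry of $\Lambda$.
   Context: Let $\omega=e^{2\pi i/3}$, $\mathcal{E}=\mathbb{Z}[\omega]$, $\theta=\sqrt{-3}$. Let $\Lambda=\mathcal{E}^5$ with Hermitian form $h(x,y)=-x_0\bar y_0+x_1\bar y_1+\dots+x_4\bar y_4$. For $j=0,\dots,4$ let $\xi_j$ be the antilinear map $(x_0,\dots,x_4)\mapsto(\bar x_0,\dots,\bar x_{4-j},-\bar x_{5-j},\dots,-\bar x_4)$, and let $\Lambda_j=\Lambda^{\xi_j}$ be the $\mathbb{Z}$-lattice of $\xi_j$-fixed vectors, i.e. $\Lambda_j=\mathbb{Z}^{5-j}\oplus\theta\mathbb{Z}^j\subset\mathcal{E}^5$, equipped with the restriction of $h$ (which is real- and integer-valued on it). *)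

(* the Eisenstein integers are realised inside algC. *)
From HB Require Import structures.
From mathcomp Require Import all_boot all_order all_algebra all_field.
Set Implicit Arguments. Unset Strict Implicit. Unset Printing Implicit Defensive.
Import Order.TTheory GRing.Theory Num.Theory.
Local Open Scope ring_scope.

(* omega = e^{2 pi i/3} = (-1 + i sqrt 3)/2 *)
Definition omega : algC := (-1 + 'i * sqrtC 3) / 2.
Definition theta : algC := 'i * sqrtC 3.

Definition inE (z : algC) : Prop :=
  exists a b : int, z = a%:~R + b%:~R * omega.

Definition vec := 'cV[algC]_5.

Definition inLambda (x : vec) : Prop := forall k : 'I_5, inE (x k 0).

Definition hsign (k : 'I_5) : algC := if val k == 0%N then -1 else 1.
Definition h (x y : vec) : algC :=
  \sum_(k < 5) hsign k * x k 0 * (y k 0)^*.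

Definition xi (j : nat) (x : vec) : vec :=
  \col_(k < 5) (if (val k < 5 - j)%N then (x k 0)^* else - (x k 0)^*).

Definition inLambdaj (j : nat) (x : vec) : Prop := inLambda x /\ xi j x = x.

(* Isometry of the Z-lattice Lambda_j: a Z-linear (i.e. additive) bijection
   Lambda_j -> Lambda_j preserving (the restriction of) h.  Only the values of
   g on Lambda_j matter. *)
Definition isometry_Lambdaj (j : nat) (g : vec -> vec) : Prop :=
  [/\ (forall x y, inLambdaj j x -> inLambdaj j y -> g (x + y) = g x + g y),
      (forall x, inLambdaj j x -> inLambdaj j (g x)),
      (exists g' : vec -> vec,
          (forall x, inLambdaj j x -> inLambdaj j (g' x)) /\
          (forall x, inLambdaj j x -> g' (g x) = x /\ g (g' x) = x)) &
      (forall x y, inLambdaj j x -> inLambdaj j y -> h (g x) (g y) = h x y)].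

(* E-linear isometry of Lambda = E^5: an automorphism of the E-module E^5,
   i.e. a matrix with entries in E with an inverse with entries in E,
   preserving h on Lambda. *)
Definition isometry_Lambda (G : 'M[algC]_5) : Prop :=
  [/\ (forall i k, inE (G i k)),
      (exists G' : 'M[algC]_5,
          [/\ forall i k, inE (G' i k), G *m G' = 1%:M & G' *m G = 1%:M]) &
      (forall x y, inLambda x -> inLambda y -> h (G *m x) (G *m y) = h x y)].

From Pilot Require Import Defs.
From mathcomp Require Import all_boot all_order all_algebra all_field.
From mathcomp Require Import ring.
Set Implicit Arguments. Unset Strict Implicit. Unset Printing Implicit Defensive.
Import Order.TTheory GRing.Theory Num.Theory.
Local Open Scope ring_scope.

(* Lambda_j has the Z-basis [gen j k = s_k e_k], with [s_k = 1] for [k < 5 - j]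
   and [s_k = theta] otherwise.  An additive map g on Lambda_j is therefore
   induced by the complex matrix whose k-th column is [g (gen j k) / s_k], and
   sesquilinearity of h makes that matrix an isometry of h.  Its entries are in
   E except possibly in the columns with [s_k = theta]; there one uses that the
   vectors [theta e_k] pair into 3Z with all of Lambda_j, that a surjective
   isometry of Lambda_j preserves this property, and that a vector of Lambda_j
   with this property lies in theta Lambda.  The same applied to the inverse of
   g gives an integral inverse matrix. *)

Lemma conjC_theta : theta^* = - theta.
Proof.
by rewrite /theta rmorphM /= conjCi geC0_conj ?sqrtC_ge0 ?ler0n // mulNr.
Qed.

Lemma theta_sqr : theta ^+ 2 = - 3%:R.
Proof. by rewrite /theta exprMn sqrCi sqrtCK mulN1r. Qed.

Lemma theta_neq0 : theta != 0.
Proof.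
apply/eqP => theta0; move: theta_sqr; rewrite theta0 expr0n /= => /eqP.
by rewrite eq_sym oppr_eq0 pnatr_eq0.
Qed.

Lemma theta_omega : theta = 1 + 2%:R * omega.
Proof. by rewrite /omega mulrC divfK ?pnatr_eq0 // -/theta; ring. Qed.

Lemma theta_mul_conjC : theta * theta^* = 3%:R.
Proof. by rewrite conjC_theta mulrN -expr2 theta_sqr opprK. Qed.

Lemma int_mul3_div_theta (b : int) : (3 * b)%:~R / theta = (- b)%:~R * theta.
Proof.
apply: (mulIf theta_neq0); rewrite divfK ?theta_neq0 // -mulrA -expr2 theta_sqr.
by rewrite rmorphM rmorphN /= mulrNN mulrC.
Qed.

Lemma conjC_omega : omega^* = - 1 - omega.
Proof.
rewrite /omega -/theta rmorphM /= fmorphV /= rmorphD /= rmorphN /= rmorph1.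
rewrite conjC_nat conjC_theta; by field.
Qed.

Lemma inE_int_theta (a b : int) : Defs.inE (a%:~R + b%:~R * theta).
Proof.
exists (a + b), (2 * b); rewrite theta_omega !rmorphD /= !rmorphM /=.
rewrite -[2%:~R]/(2%:R : algC); ring.
Qed.

Lemma inE_int (a : int) : Defs.inE a%:~R.
Proof. by have := inE_int_theta a 0; rewrite mul0r addr0. Qed.

Lemma inE_int_mul_theta (a : int) : Defs.inE (a%:~R * theta).
Proof. by have := inE_int_theta 0 a; rewrite add0r. Qed.

Lemma inE_conjC_fixed z : Defs.inE z -> z^* = z -> exists a : int, z = a%:~R.
Proof.
move=> [a [b ->]]; rewrite rmorphD rmorphM /= !rmorph_int conjC_omega => /eqP.
rewrite -subr_eq0 (_ : _ - _ = - (b%:~R * theta)); last first.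
  by rewrite theta_omega; ring.
rewrite oppr_eq0 mulf_eq0 (negbTE theta_neq0) orbF intr_eq0 => /eqP ->.
by exists a; rewrite mul0r addr0.
Qed.

Lemma inE_conjC_anti z :
  Defs.inE z -> - z^* = z -> exists a : int, z = a%:~R * theta.
Proof.
move=> [a [b ->]]; rewrite rmorphD rmorphM /= !rmorph_int conjC_omega => /eqP.
rewrite -subr_eq0 (_ : _ - _ = (b - 2 * a)%:~R); last first.
  by rewrite rmorphB rmorphM /= -[2%:~R]/(2%:R : algC); ring.
rewrite intr_eq0 subr_eq0 => /eqP ->; exists a.
by rewrite theta_omega rmorphM /= -[2%:~R]/(2%:R : algC); ring.
Qed.

Definition gen_scale (j : nat) (k : 'I_5) : algC :=
  if (k < 5 - j)%N then 1 else theta.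

Definition gen (j : nat) (k : 'I_5) : vec := gen_scale j k *: delta_mx k 0.

Lemma gen_scale_neq0 j k : gen_scale j k != 0.
Proof. by rewrite /gen_scale; case: ifP => _; rewrite ?oner_neq0 ?theta_neq0. Qed.

Lemma inLambdajP j x :
  inLambdaj j x <-> forall k, exists a : int, x k 0 = a%:~R * gen_scale j k.
Proof.
rewrite /gen_scale; split.
  move=> [xE /matrixP xi_x] k; have := xi_x k 0; rewrite mxE.
  case: ifP => _ x_k.
    by have [a ->] := inE_conjC_fixed (xE k) x_k; exists a; rewrite mulr1.
  exact: inE_conjC_anti (xE k) x_k.
move=> x_int; split.
  move=> k; have [a ->] := x_int k.
  by case: ifP => _; rewrite ?mulr1; [exact: inE_int | exact: inE_int_mul_theta].
apply/matrixP => k l; rewrite (ord1 l) mxE; have [a ->] := x_int k.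
rewrite rmorphM /= rmorph_int.
by case: (k < 5 - j)%N; rewrite ?conjC1 // conjC_theta mulrN opprK.
Qed.

Lemma gen_Lambdaj j k : inLambdaj j (gen j k).
Proof.
apply/inLambdajP => i; exists (i == k)%:R.
by rewrite !mxE andbT; case: eqP => [-> | _]; rewrite ?mulr1 ?mul1r ?mul0r ?mulr0.
Qed.

Lemma Lambdaj0 j : inLambdaj j 0.
Proof. by apply/inLambdajP => k; exists 0; rewrite mxE mul0r. Qed.

Lemma LambdajD j x y : inLambdaj j x -> inLambdaj j y -> inLambdaj j (x + y).
Proof.
move=> /inLambdajP x_int /inLambdajP y_int; apply/inLambdajP => k.
have [a xa] := x_int k; have [b yb] := y_int k.
by exists (a + b); rewrite mxE xa yb rmorphD mulrDl.
Qed.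

Lemma LambdajN j x : inLambdaj j x -> inLambdaj j (- x).
Proof.
move=> /inLambdajP x_int; apply/inLambdajP => k.
by have [a xa] := x_int k; exists (- a); rewrite mxE xa rmorphN mulNr.
Qed.

Lemma gen_decomp j (x : vec) : x = \sum_k (x k 0 / gen_scale j k) *: gen j k.
Proof.
rewrite {1}[x]matrix_sum_delta; apply: eq_bigr => k _.
by rewrite big_ord1 scalerA divfK ?gen_scale_neq0.
Qed.

Lemma mulmx_gen j (A : 'M[algC]_5) k : A *m gen j k = gen_scale j k *: col k A.
Proof. by rewrite -scalemxAr colE. Qed.

Lemma mx_eq_on_gen j (A B : 'M[algC]_5) :
  (forall k, A *m gen j k = B *m gen j k) -> A = B.
Proof.
move=> AB; apply/matrixP => i k; have := AB k; rewrite !mulmx_gen.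
by move=> /(scalerI (gen_scale_neq0 j k)) /matrixP /(_ i 0); rewrite !mxE.
Qed.

Lemma hDl x y z : h (x + y) z = h x z + h y z.
Proof.
by rewrite /h -big_split; apply: eq_bigr => k _; rewrite mxE mulrDr mulrDl.
Qed.

Lemma hDr x y z : h x (y + z) = h x y + h x z.
Proof.
by rewrite /h -big_split; apply: eq_bigr => k _; rewrite mxE rmorphD mulrDr.
Qed.

Lemma hZl a x y : h (a *: x) y = a * h x y.
Proof.
by rewrite /h mulr_sumr; apply: eq_bigr => k _; rewrite mxE mulrCA !mulrA.
Qed.

Lemma hZr a x y : h x (a *: y) = a^* * h x y.
Proof.
by rewrite /h mulr_sumr; apply: eq_bigr => k _; rewrite mxE rmorphM mulrCA.
Qed.

Lemma h_sum (I : finType) (a b : I -> algC) (u v : I -> vec) :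
  h (\sum_k a k *: u k) (\sum_l b l *: v l) =
  \sum_k \sum_l a k * (b l)^* * h (u k) (v l).
Proof.
have h0l y : h 0 y = 0 by rewrite -(scale0r 0) hZl mul0r.
have h0r x : h x 0 = 0 by rewrite -(scale0r 0) hZr rmorph0 mul0r.
set y := \sum_l b l *: v l.
rewrite (big_morph (h^~ y) (fun x1 x2 => hDl x1 x2 y) (h0l y)).
apply: eq_bigr => k _; rewrite hZl (big_morph _ (hDr _) (h0r _)) mulr_sumr.
by apply: eq_bigr => l _; rewrite hZr mulrA.
Qed.

Lemma h_gen_l j k y : h (gen j k) y = hsign k * gen_scale j k * (y k 0)^*.
Proof.
rewrite /h (bigD1 k) //= big1 ?addr0 => [|i /negbTE ik]; rewrite !mxE ?eqxx ?ik.
  by rewrite mulr1.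
by rewrite mulr0 mulr0 mul0r.
Qed.

Lemma h_gen_r j x l : h x (gen j l) = hsign l * x l 0 * (gen_scale j l)^*.
Proof.
rewrite /h (bigD1 l) //= big1 ?addr0 => [|i /negbTE il]; rewrite !mxE ?eqxx ?il.
  by rewrite mulr1.
by rewrite mulr0 rmorph0 mulr0.
Qed.

Lemma mulmx_isometry_gen j (A : 'M[algC]_5) :
  (forall k l, h (A *m gen j k) (A *m gen j l) = h (gen j k) (gen j l)) ->
  forall x y, h (A *m x) (A *m y) = h x y.
Proof.
move=> A_gen x y; rewrite (gen_decomp j x) (gen_decomp j y) !mulmx_sumr.
under eq_bigr do rewrite -scalemxAr.
under [X in h _ X]eq_bigr do rewrite -scalemxAr.
rewrite !h_sum; apply: eq_bigr => k _; apply: eq_bigr => l _.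
by rewrite A_gen.
Qed.

Lemma mulmx_eq_on_Lambdaj j (A : 'M[algC]_5) (g : vec -> vec) :
  (forall x y, inLambdaj j x -> inLambdaj j y -> g (x + y) = g x + g y) ->
  (forall k, A *m gen j k = g (gen j k)) ->
  forall x, inLambdaj j x -> A *m x = g x.
Proof.
move=> gD A_gen.
have g0 : g 0 = 0.
  have := gD 0 0 (Lambdaj0 j) (Lambdaj0 j).
  by rewrite addr0 -{1}[g 0]addr0 => /addrI/esym.
pose P x := inLambdaj j x /\ A *m x = g x.
have PD x y : P x -> P y -> P (x + y).
  by move=> [xL Ax] [yL Ay]; split; [exact: LambdajD | rewrite mulmxDr Ax Ay gD].
have PN x : P x -> P (- x).
  move=> [xL Ax]; split; first exact: LambdajN.
  have := gD x (- x) xL (LambdajN xL); rewrite subrr g0 => /eqP.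
  by rewrite eq_sym addrC addr_eq0 mulmxN Ax => /eqP.
have PZ x (a : int) : P x -> P (a%:~R *: x).
  move=> Px; have Pn n : P (x *+ n).
    elim: n => [|n IHn]; last by rewrite mulrS; apply: PD.
    by rewrite mulr0n; split; [exact: Lambdaj0 | rewrite mulmx0 g0].
  rewrite scaler_int; case: a => n; first exact: Pn.
  by rewrite NegzE mulrNz; exact: PN (Pn n.+1).
move=> x /inLambdajP x_int; suff [] : P x by [].
rewrite (gen_decomp j x); apply: big_ind => // [|k _].
  by split; [exact: Lambdaj0 | rewrite mulmx0 g0].
have [a ->] := x_int k; rewrite mulfK ?gen_scale_neq0 //.
by apply: PZ; split; [exact: gen_Lambdaj | exact: A_gen].
Qed.

Definition h_dvd3 j (v : vec) : Prop :=
  forall w, inLambdaj j w -> exists b : int, h v w = (3 * b)%:~R.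

Lemma gen_h_dvd3 j k : gen_scale j k = theta -> h_dvd3 j (gen j k).
Proof.
move=> sk w /inLambdajP w_int; rewrite h_gen_l; have [b ->] := w_int k.
rewrite sk rmorphM /= rmorph_int mulrCA -mulrA theta_mul_conjC.
rewrite /hsign; case: ifP => _; [exists (- b) | exists b]; rewrite rmorphM /=.
  by rewrite rmorphN /= mulN1r !mulrN mulrC.
by rewrite mul1r mulrC.
Qed.

Lemma h_dvd3_div_theta j v :
  inLambdaj j v -> h_dvd3 j v -> forall i, Defs.inE (v i 0 / theta).
Proof.
move=> /inLambdajP v_int v3 i; have [a vi] := v_int i.
rewrite vi; move: vi; rewrite /gen_scale; case: ifP => si vi; last first.
  by rewrite mulfK ?theta_neq0 //; exact: inE_int.
have [b] := v3 _ (gen_Lambdaj j i).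
rewrite h_gen_r vi /gen_scale si conjC1 !mulr1.
rewrite /hsign; case: ifP => _; rewrite ?mulN1r ?mul1r => a3.
  rewrite (_ : a%:~R = (3 * - b)%:~R); last by rewrite mulrN intrN -a3 opprK.
  by rewrite int_mul3_div_theta; exact: inE_int_mul_theta.
by rewrite a3 int_mul3_div_theta; exact: inE_int_mul_theta.
Qed.

Lemma isometry_h_dvd3 j g v :
  isometry_Lambdaj j g -> inLambdaj j v -> h_dvd3 j v -> h_dvd3 j (g v).
Proof.
move=> [_ _ [g' [g'L gK]] gh] vL v3 w wL.
by rewrite -(gK w wL).2 gh //; [exact: v3 (g'L w wL) | exact: g'L].
Qed.

Definition gen_matrix j (g : vec -> vec) : 'M[algC]_5 :=
  \matrix_(i, k) (g (gen j k) i 0 / gen_scale j k).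

Lemma gen_matrix_gen j g k : gen_matrix j g *m gen j k = g (gen j k).
Proof.
apply/matrixP => i l; rewrite (ord1 l) mulmx_gen !mxE.
by rewrite mulrC divfK ?gen_scale_neq0.
Qed.

Lemma gen_matrix_inE j g :
  isometry_Lambdaj j g -> forall i k, Defs.inE (gen_matrix j g i k).
Proof.
move=> gI i k; have [_ gL _ _] := gI; have gkL := gL _ (gen_Lambdaj j k).
rewrite mxE {1}/gen_scale; case: ifP => sk; first by rewrite divr1; exact: gkL.1.
apply: h_dvd3_div_theta gkL _ i; apply: isometry_h_dvd3 gI (gen_Lambdaj j k) _.
by apply: gen_h_dvd3; rewrite /gen_scale sk.
Qed.

Lemma gen_matrix_Lambdaj j g :
  isometry_Lambdaj j g -> forall x, inLambdaj j x -> gen_matrix j g *m x = g x.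
Proof.
by move=> [gD _ _ _]; apply: mulmx_eq_on_Lambdaj gD (gen_matrix_gen j g).
Qed.

Lemma gen_matrix_isometry j g : isometry_Lambdaj j g ->
  forall x y, h (gen_matrix j g *m x) (gen_matrix j g *m y) = h x y.
Proof.
move=> [_ _ _ gh]; apply: (@mulmx_isometry_gen j) => k l.
by rewrite !gen_matrix_gen; exact: gh (gen_Lambdaj j k) (gen_Lambdaj j l).
Qed.

Lemma isometry_Lambdaj_inv j g g' : isometry_Lambdaj j g ->
  (forall x, inLambdaj j x -> inLambdaj j (g' x)) ->
  (forall x, inLambdaj j x -> g' (g x) = x /\ g (g' x) = x) ->
  isometry_Lambdaj j g'.
Proof.
move=> [gD gL _ gh] g'L gK; have g'K x (xL : inLambdaj j x) := (gK x xL).2.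
split => //.
- move=> x y xL yL; have [x'L y'L] := (g'L x xL, g'L y yL).
  by rewrite -{1}(g'K x xL) -{1}(g'K y yL) -gD // (gK _ (LambdajD x'L y'L)).1.
- by exists g; split => // x xL; have [-> ->] := gK x xL.
- move=> x y xL yL; have [x'L y'L] := (g'L x xL, g'L y yL).
  by rewrite -{2}(g'K x xL) -{2}(g'K y yL) gh.
Qed.

Theorem lemma5p2 (j : nat) (hj : (j <= 4)%N) (g : vec -> vec) :
  isometry_Lambdaj j g ->
  exists G : 'M[algC]_5,
    isometry_Lambda G /\ (forall x, inLambdaj j x -> G *m x = g x).
Proof.
move=> gI; have [_ gL [g' [g'L gK]] _] := gI.
have g'I := isometry_Lambdaj_inv gI g'L gK.
exists (gen_matrix j g); split; last exact: gen_matrix_Lambdaj.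
split; [exact: gen_matrix_inE | | by move=> x y _ _; exact: gen_matrix_isometry].
exists (gen_matrix j g'); split; first exact: gen_matrix_inE.
- apply: (@mx_eq_on_gen j) => k; have kL := gen_Lambdaj j k.
  rewrite mul1mx -mulmxA gen_matrix_gen gen_matrix_Lambdaj ?(gK _ kL).2 //.
  exact: g'L.
- apply: (@mx_eq_on_gen j) => k; have kL := gen_Lambdaj j k.
  rewrite mul1mx -mulmxA gen_matrix_gen gen_matrix_Lambdaj ?(gK _ kL).1 //.
  exact: gL.
Qed.
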